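(* Let $p,q\ge2$ and let $\pi=(\pi_{u,v})$ be a probability law on $\{1,\dots,p\}\times\{1,\dots,q\}$ with margins $\pi_{u,\cdot}=\sum_v\pi_{u,v}$ and $\pi_{\cdot,v}=\sum_u\pi_{u,v}$. Let $(U_1,V_1)$ and $(U_2,V_2)$ be two independent draws from $\pi$. Then $$\pi_{u,v}=\frac{\pi_{u,\cdot}}{q}+\frac{\pi_{\cdot,v}}{p}-\frac{1}{pq}\quad\text{for all }u,v$$ if and only if the weighted expected number of agreements equals the weighted expected number of disagreements, namely $$\frac{\mathbb P(U_1=U_2,V_1=V_2)}{pq}+\frac{\mathbb P(U_1\ne U_2,V_1\ne V_2)}{p(p-1)q(q-1)}=\frac{\mathbb P(U_1=U_2,V_1\ne V_2)}{pq(q-1)}+\frac{\mathbb P(U_1\ne U_2,V_1=V_2)}{p(p-1)q}.$$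
   Context: An ''agreement'' between the two draws occurs when the two variables both coincide ($U_1=U_2$ and $V_1=V_2$) or both differ; a ''disagreement'' when exactly one coincides. The weights $pq$, $p(p-1)q(q-1)$, $pq(q-1)$, $p(p-1)q$ count the possible pairs of classes realizing each type. *)

From mathcomp Require Import all_boot all_order all_algebra.
Set Implicit Arguments. Unset Strict Implicit. Unset Printing Implicit Defensive.
Import Order.TTheory GRing.Theory Num.Theory.
Local Open Scope ring_scope.

(* A probability law on {1..p} x {1..q}, indices shifted to 'I_p x 'I_q. *)
Definition is_prob_law (R : realFieldType) (p q : nat) (pi : 'I_p -> 'I_q -> R) :=
  (forall u v, 0 <= pi u v) /\ \sum_(u < p) \sum_(v < q) pi u v = 1.

Definition marg1 (R : realFieldType) p q (pi : 'I_p -> 'I_q -> R) (u : 'I_p) : R :=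
  \sum_(v < q) pi u v.
Definition marg2 (R : realFieldType) p q (pi : 'I_p -> 'I_q -> R) (v : 'I_q) : R :=
  \sum_(u < p) pi u v.

(* Probability that two independent draws (U1,V1),(U2,V2) from pi satisfy
   (U1 == U2) = a and (V1 == V2) = b. *)
Definition pair_prob (R : realFieldType) p q (pi : 'I_p -> 'I_q -> R) (a b : bool) : R :=
  \sum_(u1 < p) \sum_(v1 < q) \sum_(u2 < p) \sum_(v2 < q)
    (if ((u1 == u2) == a) && ((v1 == v2) == b) then pi u1 v1 * pi u2 v2 else 0).

From mathcomp Require Import all_boot all_order all_algebra.
From mathcomp Require Import ring.
Set Implicit Arguments. Unset Strict Implicit. Unset Printing Implicit Defensive.
Import Order.TTheory GRing.Theory Num.Theory.
Local Open Scope ring_scope.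

(* Write S = sum pi_uv^2, A = sum pi_u.^2 and B = sum pi_.v^2.  The four pair
   probabilities are S, A - S, B - S and 1 - A - B + S, so the weighted
   agreements minus disagreements equal (S - A/q - B/p + 1/pq) / ((p-1)(q-1)).
   This numerator is sum r_uv^2, where r is the residual of pi from the additive
   fit pi_u./q + pi_.v/p - 1/pq: r has zero row and column sums, hence is
   orthogonal to every additive array, the fit included.  So the weighted
   counts balance iff r = 0. *)

Lemma sum_if_eq (V : nmodType) n (j : 'I_n) (F : 'I_n -> V) :
  \sum_(i < n) (if j == i then F i else 0) = F j.
Proof. by rewrite -big_mkcond (big_pred1 j) // => i; rewrite /= eq_sym. Qed.

Lemma sumr_sqr_eq0 (R : realDomainType) m n (f : 'I_m -> 'I_n -> R) :
  \sum_(i < m) \sum_(j < n) f i j ^+ 2 = 0 <-> forall i j, f i j = 0.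
Proof.
split=> [sum0 i j|f0]; last first.
  by rewrite big1 // => i _; rewrite big1 // => j _; rewrite f0 expr0n.
have f2_ge0 k l : 0 <= f k l ^+ 2 by rewrite sqr_ge0.
have row0 := psumr_eq0P (fun k _ => sumr_ge0 _ (fun l _ => f2_ge0 k l)) sum0.
apply/eqP; rewrite -sqrf_eq0; apply/eqP.
exact: (psumr_eq0P (fun l _ => f2_ge0 i l) (row0 i isT)).
Qed.

Lemma sum_mul_additive_eq0 (R : pzRingType) m n (r : 'I_m -> 'I_n -> R) f g :
  (forall i, \sum_(j < n) r i j = 0) -> (forall j, \sum_(i < m) r i j = 0) ->
  \sum_(i < m) \sum_(j < n) r i j * (f i + g j) = 0.
Proof.
move=> row0 col0.
under eq_bigr do rewrite (eq_bigr _ (fun j _ => mulrDr _ _ _)) big_split /=.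
rewrite big_split /= big1 => [|i _]; last by rewrite -mulr_suml row0 mul0r.
rewrite add0r exchange_big big1 //= => j _.
by rewrite -mulr_suml col0 mul0r.
Qed.

Section PairProbabilities.
Variables (R : realFieldType) (p q : nat) (pi : 'I_p -> 'I_q -> R).

Lemma pair_prob_transpose a b :
  pair_prob (fun v u => pi u v) a b = pair_prob pi b a.
Proof.
rewrite /pair_prob exchange_big; apply: eq_bigr => u1 _; apply: eq_bigr => v1 _.
rewrite exchange_big; apply: eq_bigr => u2 _; apply: eq_bigr => v2 _.
by rewrite andbC.
Qed.

Lemma pair_prob_eq_eq : pair_prob pi true true = \sum_(u < p) \sum_(v < q) pi u v ^+ 2.
Proof.
apply: eq_bigr => u1 _; apply: eq_bigr => v1 _.
rewrite expr2 -(sum_if_eq u1 (fun u2 => pi u1 v1 * pi u2 v1)).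
apply: eq_bigr => u2 _; have [<-|_] := eqVneq u1 u2; last by rewrite big1.
rewrite -(sum_if_eq v1 (fun v2 => pi u1 v1 * pi u1 v2)).
by apply: eq_bigr => v2 _; rewrite eqxx eqb_id.
Qed.

Lemma pair_prob_eq_any :
  pair_prob pi true true + pair_prob pi true false = \sum_(u < p) marg1 pi u ^+ 2.
Proof.
rewrite -big_split; apply: eq_bigr => u1 _.
rewrite expr2 {2}/marg1 mulr_suml -big_split; apply: eq_bigr => v1 _.
rewrite -big_split /= -(sum_if_eq u1 (fun u2 => pi u1 v1 * marg1 pi u2)).
apply: eq_bigr => u2 _; rewrite -big_split /=.
have [<-|_] := eqVneq u1 u2; last by rewrite big1 // => v2 _; rewrite addr0.
rewrite /marg1 mulr_sumr; apply: eq_bigr => v2 _.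
by case: (v1 == v2); rewrite ?addr0 ?add0r.
Qed.

Lemma pair_prob_total :
  pair_prob pi true true + pair_prob pi true false
    + pair_prob pi false true + pair_prob pi false false
  = (\sum_(u < p) \sum_(v < q) pi u v) ^+ 2.
Proof.
rewrite expr2 /pair_prob -!big_split mulr_suml; apply: eq_bigr => u1 _.
rewrite -!big_split mulr_suml; apply: eq_bigr => v1 _.
rewrite -!big_split mulr_sumr; apply: eq_bigr => u2 _.
rewrite -!big_split mulr_sumr; apply: eq_bigr => v2 _.
by case: (u1 == u2); case: (v1 == v2); rewrite /= ?addr0 ?add0r.
Qed.

End PairProbabilities.

Lemma pair_prob_any_eq (R : realFieldType) p q (pi : 'I_p -> 'I_q -> R) :
  pair_prob pi true true + pair_prob pi false true = \sum_(v < q) marg2 pi v ^+ 2.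
Proof. by rewrite -!(pair_prob_transpose pi) pair_prob_eq_any. Qed.

Section AdditiveFit.
Variables (R : realFieldType) (p q : nat) (pi : 'I_p -> 'I_q -> R).

Definition additive_fit u v := marg1 pi u / q%:R + marg2 pi v / p%:R - 1 / (p * q)%:R.

Definition fit_residual u v := pi u v - additive_fit u v.

Lemma sum_marg2 : \sum_(v < q) marg2 pi v = \sum_(u < p) \sum_(v < q) pi u v.
Proof. exact: exchange_big. Qed.

Hypotheses (p_gt0 : (0 < p)%N) (q_gt0 : (0 < q)%N).
Hypothesis mass1 : \sum_(u < p) \sum_(v < q) pi u v = 1.

Let p_neq0 : p%:R != 0 :> R. Proof. by rewrite pnatr_eq0 -lt0n. Qed.
Let q_neq0 : q%:R != 0 :> R. Proof. by rewrite pnatr_eq0 -lt0n. Qed.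

Lemma sum_fit_residual_row u : \sum_(v < q) fit_residual u v = 0.
Proof.
rewrite !sumrB big_split /= -[\sum_(v < q) marg2 pi v / _]mulr_suml.
rewrite sum_marg2 mass1 -/(marg1 pi u).
rewrite !sumr_const card_ord natrM; field.
by rewrite p_neq0 q_neq0.
Qed.

Lemma sum_fit_residual_col v : \sum_(u < p) fit_residual u v = 0.
Proof.
rewrite !sumrB big_split /= -[\sum_(u < p) _ / q%:R]mulr_suml mass1 -/(marg2 pi v).
rewrite !sumr_const card_ord natrM; field.
by rewrite p_neq0 q_neq0.
Qed.

Lemma sum_fit_residual_sqr :
  \sum_(u < p) \sum_(v < q) fit_residual u v ^+ 2
  = \sum_(u < p) \sum_(v < q) pi u v ^+ 2 - (\sum_(u < p) marg1 pi u ^+ 2) / q%:R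
    - (\sum_(v < q) marg2 pi v ^+ 2) / p%:R + 1 / (p * q)%:R.
Proof.
have residual_orth : \sum_(u < p) \sum_(v < q) fit_residual u v * additive_fit u v = 0.
  under eq_bigr do under eq_bigr do rewrite /additive_fit -addrA.
  exact: sum_mul_additive_eq0 sum_fit_residual_row sum_fit_residual_col.
have -> : \sum_(u < p) \sum_(v < q) fit_residual u v ^+ 2
          = \sum_(u < p) \sum_(v < q) fit_residual u v * pi u v
            - \sum_(u < p) \sum_(v < q) fit_residual u v * additive_fit u v.
  rewrite -sumrB; apply: eq_bigr => u _.
  by rewrite -sumrB; apply: eq_bigr => v _; rewrite -mulrBr expr2.
rewrite residual_orth subr0.
have row_w : \sum_(u < p) \sum_(v < q) marg1 pi u / q%:R * pi u v
             = (\sum_(u < p) marg1 pi u ^+ 2) / q%:R.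
  by rewrite mulr_suml; apply: eq_bigr => u _; rewrite -mulr_sumr expr2 mulrAC.
have col_w : \sum_(u < p) \sum_(v < q) marg2 pi v / p%:R * pi u v
             = (\sum_(v < q) marg2 pi v ^+ 2) / p%:R.
  rewrite exchange_big mulr_suml; apply: eq_bigr => v _.
  by rewrite -mulr_sumr expr2 mulrAC.
have const_w : \sum_(u < p) \sum_(v < q) 1 / (p * q)%:R * pi u v = 1 / (p * q)%:R.
  by under eq_bigr do rewrite -mulr_sumr; rewrite -mulr_sumr mass1 mulr1.
rewrite -row_w -col_w -const_w -!sumrB -big_split /=; apply: eq_bigr => u _.
rewrite -!sumrB -big_split /=; apply: eq_bigr => v _.
by rewrite /fit_residual /additive_fit; ring.
Qed.

Lemma agreement_balance (p_gt1 : (1 < p)%N) (q_gt1 : (1 < q)%N) :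
  pair_prob pi true true / (p * q)%:R
    + pair_prob pi false false / (p * (p - 1) * q * (q - 1))%:R
  - (pair_prob pi true false / (p * q * (q - 1))%:R
    + pair_prob pi false true / (p * (p - 1) * q)%:R)
  = (\sum_(u < p) \sum_(v < q) fit_residual u v ^+ 2) / ((p%:R - 1) * (q%:R - 1)).
Proof.
have p1_neq0 : p%:R - 1 != 0 :> R by rewrite subr_eq0 pnatr_eq1 gtn_eqF.
have q1_neq0 : q%:R - 1 != 0 :> R by rewrite subr_eq0 pnatr_eq1 gtn_eqF.
have -> : pair_prob pi false false = 1 - pair_prob pi true true
    - pair_prob pi true false - pair_prob pi false true.
  by rewrite -(expr1n _ 2) -mass1 -pair_prob_total; ring.
have -> : pair_prob pi true false = \sum_(u < p) marg1 pi u ^+ 2 - pair_prob pi true true.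
  by rewrite -pair_prob_eq_any addrC addKr.
have -> : pair_prob pi false true = \sum_(v < q) marg2 pi v ^+ 2 - pair_prob pi true true.
  by rewrite -pair_prob_any_eq addrC addKr.
rewrite sum_fit_residual_sqr pair_prob_eq_eq !natrM !natrB ?(ltnW p_gt1) ?(ltnW q_gt1) //.
by field; rewrite p_neq0 q_neq0 p1_neq0 q1_neq0.
Qed.

End AdditiveFit.

Theorem theorem6 (R : realFieldType) (p q : nat) (pi : 'I_p -> 'I_q -> R) :
  (2 <= p)%N -> (2 <= q)%N -> is_prob_law pi ->
  (forall u v, pi u v = marg1 pi u / q%:R + marg2 pi v / p%:R - 1 / (p * q)%:R)
  <->
  pair_prob pi true true / (p * q)%:R
    + pair_prob pi false false / (p * (p - 1) * q * (q - 1))%:R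
  = pair_prob pi true false / (p * q * (q - 1))%:R
    + pair_prob pi false true / (p * (p - 1) * q)%:R.
Proof.
move=> p_gt1 q_gt1 [_ mass1].
have [p_gt0 q_gt0] := (ltnW p_gt1, ltnW q_gt1).
have denom_neq0 : (p%:R - 1) * (q%:R - 1) != 0 :> R.
  by rewrite mulf_neq0 // subr_eq0 pnatr_eq1 gtn_eqF.
rewrite (rwP eqP) -subr_eq0 agreement_balance // mulf_eq0 invr_eq0 (negbTE denom_neq0).
rewrite orbF -(rwP eqP) sumr_sqr_eq0.
by split=> fit u v; [rewrite /fit_residual fit subrr | exact: subr0_eq (fit u v)].
Qed.
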